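(* Let $g$ be a real $M\times M$ matrix, $g\neq 0$, all of whose singular values are equal (i.e. the largest singular value has multiplicity $d=M$). Then there exist finite-dimensional Hilbert spaces $\mathcal H_1,\mathcal H_2$, a state $\rho$ on $\mathcal H_1\otimes\mathcal H_2$ and observables $\mathcal A_i(x)$, $x=1,\dots,M$ (Hermitian, eigenvalues in $[-1,1]$) with $\sum_{x_1,x_2=1}^M g_{x_1,x_2}\operatorname{tr}(\rho\,\mathcal A_1(x_1)\otimes\mathcal A_2(x_2))=M\,\|g\|_2$; i.e. the bound $\sqrt{M_1M_2}\|g\|_2$ of Theorem 1 is attained.
   Context: $\|g\|_2$ denotes the largest singular value of $g$. *)

(* complex Hilbert spaces C^n over a numClosedFieldType C
   (e.g. algebraic complex numbers algC, or the complex numbers). *)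
From HB Require Import structures.
From mathcomp Require Import all_boot all_order all_algebra.
Set Implicit Arguments. Unset Strict Implicit. Unset Printing Implicit Defensive.
Import Order.TTheory GRing.Theory Num.Theory.
Local Open Scope ring_scope.

Section Defs.
Context {C : numClosedFieldType}.

Definition adjmx m n (A : 'M[C]_(m, n)) : 'M[C]_(n, m) := map_mx Num.conj (A^T).

Definition hermitian n (A : 'M[C]_n) : Prop := adjmx A = A.

Definition observable n (A : 'M[C]_n) : Prop :=
  hermitian A /\ forall a, eigenvalue A a -> (-1 <= a <= 1).

Definition psd n (A : 'M[C]_n) : Prop :=
  hermitian A /\ forall a, eigenvalue A a -> 0 <= a.

Definition is_state n (rho : 'M[C]_n) : Prop := psd rho /\ \tr rho = 1.

(* decomposition of an index of C^(m*n) = C^m (x) C^n into a pair of indices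
   (lexicographic, the inverse of mxvec_index) *)
Definition unpair_idx m n (k : 'I_(m * n)) : 'I_m * 'I_n :=
  enum_val (cast_ord (esym (mxvec_cast m n)) k).

Definition tensmx m n (A : 'M[C]_m) (B : 'M[C]_n) : 'M[C]_(m * n) :=
  \matrix_(k, l) (A (unpair_idx k).1 (unpair_idx l).1
                  * B (unpair_idx k).2 (unpair_idx l).2).

Definition singular_value m (g : 'M[C]_m) (s : C) : Prop :=
  0 <= s /\ eigenvalue (adjmx g *m g) (s ^+ 2).

Definition spec_norm m (g : 'M[C]_m) (s : C) : Prop :=
  singular_value g s /\ forall t, singular_value g t -> t <= s.

End Defs.

(* Proof.  (1) Equal singular values force g^* g = s^2 I: the Hermitian
   matrix g^* g - s^2 I has only the eigenvalue 0, hence is nilpotent by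
   Cayley-Hamilton, hence zero.  Since g is real, every column of g has
   Euclidean norm s.  (2) Clifford matrices: there are M Hermitian, pairwise
   anticommuting involutions G x of size N = 2^M (built recursively by
   2 x 2 blocks).  For a real unit vector c, sum_x c_x G_x is again a
   Hermitian involution, and tr(G_x G_x') = N [x = x'].  (3) For the maximally
   entangled state rho on C^N (x) C^N, tr(rho (A (x) B)) = tr(A^T B) / N.
   Taking A1(x) = (G x)^T and A2(y) = sum_x (g_xy / s) G_x, the correlation
   tr(rho A1(x) (x) A2(y)) equals g_xy / s, so the Bell sum is
   sum_y sum_x g_xy^2 / s = M s. *)

From Pilot Require Import Defs.
From HB Require Import structures.
From mathcomp Require Import all_boot all_order all_algebra.
Set Implicit Arguments. Unset Strict Implicit. Unset Printing Implicit Defensive.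
Import Order.TTheory GRing.Theory Num.Theory.
Local Open Scope ring_scope.

(* all_algebra also exports a (sesquilinear) [hermitian]; we mean the one of Defs. *)
Local Notation hermitian := Defs.hermitian.

Lemma sum_natmul_delta (V : nmodType) n (i : 'I_n) (F : 'I_n -> V) :
  \sum_(j < n) F j *+ (i == j) = F i.
Proof.
rewrite (bigD1 i) //= eqxx big1 ?addr0 // => j ji.
by rewrite eq_sym (negbTE ji).
Qed.

Lemma natmul2I (F : numFieldType) (V : lmodType F) (u v : V) :
  u *+ 2 = v *+ 2 -> u = v.
Proof. by rewrite -!scaler_nat; apply: scalerI; rewrite pnatr_eq0. Qed.

Section Adjoint.
Variable C : numClosedFieldType.

Lemma adjmxE m n (A : 'M[C]_(m, n)) i j : adjmx A i j = (A j i)^*.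
Proof. by rewrite !mxE. Qed.

Lemma adjmxK m n (A : 'M[C]_(m, n)) : adjmx (adjmx A) = A.
Proof. by apply/matrixP => i j; rewrite !adjmxE conjCK. Qed.

Lemma adjmxM m n p (A : 'M[C]_(m, n)) (B : 'M[C]_(n, p)) :
  adjmx (A *m B) = adjmx B *m adjmx A.
Proof. by rewrite /adjmx trmx_mul map_mxM. Qed.

Lemma adjmxD m n (A B : 'M[C]_(m, n)) : adjmx (A + B) = adjmx A + adjmx B.
Proof. by rewrite /adjmx linearD /= map_mxD. Qed.

Lemma adjmxN m n (A : 'M[C]_(m, n)) : adjmx (- A) = - adjmx A.
Proof. by rewrite /adjmx linearN /= map_mxN. Qed.

Lemma adjmxZ m n (a : C) (A : 'M[C]_(m, n)) : adjmx (a *: A) = a^* *: adjmx A.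
Proof. by rewrite /adjmx linearZ /= map_mxZ. Qed.

Lemma adjmx_sum m n (I : finType) (F : I -> 'M[C]_(m, n)) :
  adjmx (\sum_i F i) = \sum_i adjmx (F i).
Proof. by rewrite /adjmx linear_sum /= map_mx_sum. Qed.

Lemma adjmx0 m n : adjmx (0 : 'M[C]_(m, n)) = 0.
Proof. by rewrite /adjmx trmx0 map_mx0. Qed.

Lemma adjmx_scalar n (a : C) : adjmx (a%:M : 'M[C]_n) = a^*%:M.
Proof. by rewrite /adjmx tr_scalar_mx map_scalar_mx. Qed.

Lemma adjmx1 n : adjmx (1%:M : 'M[C]_n) = 1%:M.
Proof. by rewrite adjmx_scalar conjC1. Qed.

Lemma adjmx_tr m n (A : 'M[C]_(m, n)) : adjmx A^T = (adjmx A)^T.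
Proof. by apply/matrixP => i j; rewrite !mxE. Qed.

Lemma adjmx_block m1 m2 n1 n2 (a : 'M[C]_(m1, n1)) (b : 'M[C]_(m1, n2))
    (c : 'M[C]_(m2, n1)) (d : 'M[C]_(m2, n2)) :
  adjmx (block_mx a b c d) = block_mx (adjmx a) (adjmx c) (adjmx b) (adjmx d).
Proof. by rewrite /adjmx tr_block_mx map_block_mx. Qed.

End Adjoint.

Lemma sum_sqr_norm_eq0 (C : numClosedFieldType) (I : finType) (F : I -> C) :
  \sum_i `|F i| ^+ 2 = 0 -> forall i, F i = 0.
Proof.
move=> sum0 i; apply/eqP; rewrite -normr_eq0 -(sqrf_eq0 (R := C)).
exact/eqP/(psumr_eq0P (fun i _ => exprn_ge0 2 (normr_ge0 (F i))) sum0).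
Qed.

Section Positivity.
Variable C : numClosedFieldType.

Lemma dotmx_self_gt0 n (u : 'rV[C]_n) : u != 0 -> 0 < (u *m adjmx u) 0 0.
Proof.
have norm_u : (u *m adjmx u) 0 0 = \sum_j `|u 0 j| ^+ 2.
  by rewrite mxE; apply: eq_bigr => j _; rewrite adjmxE normCK.
move=> u_nz; rewrite norm_u lt_def sumr_ge0 ?andbT; last by move=> j _; exact: exprn_ge0.
apply: contra u_nz => /eqP/sum_sqr_norm_eq0 u0.
by apply/eqP/rowP => j; rewrite u0 mxE.
Qed.

(* A^* A = 0 forces A = 0: the diagonal of A^* A holds the column norms. *)
Lemma gram_eq0 m n (A : 'M[C]_(m, n)) : adjmx A *m A = 0 -> A = 0.
Proof.
move=> AA0; apply/matrixP => i j; rewrite mxE.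
have := congr1 (fun B : 'M[C]_n => B j j) AA0; rewrite !mxE => col0.
apply: (sum_sqr_norm_eq0 (F := fun k => A k j)) i.
by rewrite -[RHS]col0; apply: eq_bigr => k _; rewrite adjmxE normCKC.
Qed.

Lemma gram_eigenvalue_ge0 n (g : 'M[C]_n) a :
  eigenvalue (adjmx g *m g) a -> 0 <= a.
Proof.
case/eigenvalueP => v hv v_nz; set w := v *m adjmx g.
have w_norm : (w *m adjmx w) 0 0 = a * (v *m adjmx v) 0 0.
  by rewrite adjmxM adjmxK mulmxA -(mulmxA v) hv -scalemxAl mxE.
have w_ge0 : 0 <= (w *m adjmx w) 0 0.
  have [->|w_nz] := eqVneq w 0; first by rewrite mul0mx mxE.
  exact/ltW/dotmx_self_gt0.
by rewrite -(pmulr_lge0 _ (dotmx_self_gt0 v_nz)) -w_norm.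
Qed.

End Positivity.

Section Hermitian.
Variable C : numClosedFieldType.

Lemma hermitianX n (K : 'M[C]_n) k : hermitian K -> hermitian (K ^+ k).
Proof.
rewrite /hermitian => hK; elim: k => [|k IH]; first by rewrite expr0 -idmxE adjmx1.
by rewrite exprS -mulmxE adjmxM IH hK mulmxE -exprSr exprS.
Qed.

(* A nilpotent Hermitian matrix is zero: K^(k+2) = 0 gives (K^(k+1))^* K^(k+1) = 0. *)
Lemma hermitian_nilpotent n (K : 'M[C]_n) k : hermitian K -> K ^+ k.+1 = 0 -> K = 0.
Proof.
move=> hK; elim: k => [|k IH]; first by rewrite expr1.
move=> Kk0; apply: IH; apply: gram_eq0.
by rewrite (hermitianX _ hK) mulmxE -exprD addSn -addnS exprD Kk0 mulr0.
Qed.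

(* A Hermitian matrix whose only eigenvalue is 0 is zero: over an algebraically
   closed field its characteristic polynomial is X^n, so it is nilpotent by
   Cayley-Hamilton. *)
Lemma hermitian_eigenvalues0 n (K : 'M[C]_n) :
  hermitian K -> (forall a, eigenvalue K a -> a = 0) -> K = 0.
Proof.
case: n K => [|n] K hK eigK; first by apply/matrixP => -[].
have [r char_r] := closed_field_poly_normal (char_poly K).
rewrite (monicP (char_poly_monic K)) scale1r in char_r.
have char_X : char_poly K = 'X ^+ size r.
  rewrite char_r (eq_big_seq (fun=> 'X)) ?big_const_seq ?count_predT ?iter_mulr_1 //.
  move=> z z_r; rewrite (eigK z) ?subr0 // eigenvalue_root_char char_r.
  by rewrite root_prod_XsubC.
have := Cayley_Hamilton K; rewrite char_X rmorphXn /= horner_mx_X.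
case: (size r) => [|k Kk0]; last exact: hermitian_nilpotent hK Kk0.
by rewrite expr0 => one0; rewrite -[K]mulr1 one0 mulr0.
Qed.

End Hermitian.

(* If all singular values of g coincide with s, then g^* g = s^2 I: every
   eigenvalue of the Hermitian matrix g^* g - s^2 I vanishes. *)
Lemma gram_equal_singular_values (C : numClosedFieldType) n (g : 'M[C]_n) s :
  (forall t t', singular_value g t -> singular_value g t' -> t = t') ->
  singular_value g s -> adjmx g *m g = (s ^+ 2)%:M.
Proof.
move=> sv_unique [s_ge0 s_sv].
have eig_gram a : eigenvalue (adjmx g *m g) a -> a = s ^+ 2.
  move=> a_eig; have a_sv : singular_value g (sqrtC a).
    by split; rewrite ?sqrtCK // sqrtC_ge0; exact: gram_eigenvalue_ge0 a_eig.
  by rewrite -(sv_unique _ _ a_sv (conj s_ge0 s_sv)) sqrtCK.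
apply/eqP; rewrite -subr_eq0; apply/eqP/hermitian_eigenvalues0.
  rewrite /hermitian adjmxD adjmxN adjmxM adjmxK adjmx_scalar.
  by rewrite conj_Creal // rpredX // ger0_real.
move=> a /eigenvalueP [v hv v_nz].
suff /eig_gram/(canRL (addrK _)) : eigenvalue (adjmx g *m g) (a + s ^+ 2).
  by rewrite subrr.
apply/eigenvalueP; exists v => //.
by rewrite -[adjmx g *m g](subrK (s ^+ 2)%:M) mulmxDr hv mul_mx_scalar scalerDl.
Qed.

Lemma real_gram_scalar_col (C : numClosedFieldType) n (g : 'M[C]_n) a :
  g \is a mxOver Num.real -> adjmx g *m g = a%:M ->
  forall y, \sum_x g x y ^+ 2 = a.
Proof.
move=> g_real gram_a y.
have := congr1 (fun A : 'M[C]_n => A y y) gram_a; rewrite /= !mxE eqxx mulr1n => <-.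
by apply: eq_bigr => x _; rewrite adjmxE conj_Creal ?expr2 // (mxOverP g_real).
Qed.

Lemma involution_observable (C : numClosedFieldType) n (A : 'M[C]_n) :
  hermitian A -> A *m A = 1%:M -> observable A.
Proof.
move=> hA AA1; split => // a /eigenvalueP [v hv v_nz].
have : (a ^+ 2 - 1) *: v = 0.
  by rewrite scalerBl scale1r expr2 -scalerA -hv scalemxAl -hv -mulmxA AA1 mulmx1 subrr.
move/eqP; rewrite scaler_eq0 (negbTE v_nz) orbF subr_eq0 sqrf_eq1.
by case/orP => /eqP ->; rewrite ?lexx ?andbT ?lerN10 ?ler01 // (le_trans (lerN10 _)) ?ler01.
Qed.

Lemma projection_psd (C : numClosedFieldType) n (P : 'M[C]_n) :
  hermitian P -> P *m P = P -> psd P.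
Proof.
move=> hP PP; split => // a /eigenvalueP [v hv v_nz].
have : (a ^+ 2 - a) *: v = 0.
  by rewrite scalerBl expr2 -scalerA -hv scalemxAl -hv -mulmxA PP subrr.
move/eqP; rewrite scaler_eq0 (negbTE v_nz) orbF expr2 -[X in _ - X]mulr1 -mulrBr mulf_eq0.
by case/orP => [/eqP -> //|]; rewrite subr_eq0 => /eqP ->; exact: ler01.
Qed.

Lemma trmx_involution_observable (C : numClosedFieldType) n (A : 'M[C]_n) :
  hermitian A -> A *m A = 1%:M -> observable A^T.
Proof.
move=> hA AA1; apply: involution_observable; first by rewrite /hermitian adjmx_tr hA.
by rewrite -trmx_mul AA1 trmx1.
Qed.

Section CliffordRelations.
Variables (C : numClosedFieldType) (M N : nat) (G : 'I_M -> 'M[C]_N).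
Hypothesis G_sq : forall x, G x *m G x = 1%:M.
Hypothesis G_anti : forall x x', x != x' -> G x *m G x' = - (G x' *m G x).

Lemma clifford_anticomm x x' :
  G x *m G x' + G x' *m G x = (1%:M *+ 2) *+ (x == x').
Proof.
by case: eqVneq => [<-|ne]; rewrite ?G_sq ?mulr2n // G_anti // addNr.
Qed.

Lemma clifford_comb_sq (c : 'I_M -> C) :
  (\sum_x c x *: G x) *m (\sum_x c x *: G x) = (\sum_x c x ^+ 2) *: 1%:M.
Proof.
pose S := \sum_x \sum_x' (c x * c x') *: (G x *m G x').
have expand : (\sum_x c x *: G x) *m (\sum_x c x *: G x) = S.
  rewrite mulmx_suml; apply: eq_bigr => x _; rewrite mulmx_sumr.
  by apply: eq_bigr => x' _; rewrite -scalemxAl -scalemxAr scalerA.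
have swap : S = \sum_x \sum_x' (c x * c x') *: (G x' *m G x).
  by rewrite /S exchange_big; apply: eq_bigr => x _; apply: eq_bigr => x' _; rewrite mulrC.
rewrite expand; apply: natmul2I; rewrite mulr2n {2}swap -big_split scaler_suml -sumrMnl.
apply: eq_bigr => x _; rewrite -big_split /=.
under eq_bigr => x' _ do rewrite -scalerDr clifford_anticomm -scalerMnr.
by rewrite sum_natmul_delta expr2 scalerMnr.
Qed.

Lemma clifford_tr_pair x x' : \tr (G x *m G x') = N%:R *+ (x == x').
Proof.
case: eqVneq => [<-|ne]; first by rewrite G_sq mxtrace1.
apply: (@pmulrnI _ 2) => //; rewrite mul0rn mulr2n.
by rewrite {2}mxtrace_mulC G_anti // linearN addNr.
Qed.

Lemma clifford_tr_comb (c : 'I_M -> C) x :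
  \tr (G x *m \sum_x' c x' *: G x') = c x * N%:R.
Proof.
rewrite mulmx_sumr linear_sum /= -(sum_natmul_delta x (fun x' => c x' * N%:R)).
by apply: eq_bigr => x' _; rewrite -scalemxAr mxtraceZ clifford_tr_pair mulrnAr.
Qed.

Hypothesis G_herm : forall x, hermitian (G x).

Lemma clifford_comb_observable (c : 'I_M -> C) :
  (forall x, c x \is Num.real) -> \sum_x c x ^+ 2 = 1 ->
  observable (\sum_x c x *: G x).
Proof.
move=> c_real c_unit; apply: involution_observable.
  rewrite /hermitian adjmx_sum; apply: eq_bigr => x _.
  by rewrite adjmxZ conj_Creal // G_herm.
by rewrite clifford_comb_sq c_unit scale1r.
Qed.

End CliffordRelations.

(* The Jordan-Wigner construction: clifford m k, for k < m, are m pairwise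
   anticommuting Hermitian involutions of size clifford_dim m = 2^m, given by
   diag(G, -G) for the generators G of size 2^(m-1) and by the block swap
   [0 1; 1 0] for the new generator. *)
Fixpoint clifford_dim (m : nat) : nat :=
  if m is m'.+1 then (clifford_dim m' + clifford_dim m')%N else 1%N.

Fixpoint clifford {C : numClosedFieldType} (m : nat) : nat -> 'M[C]_(clifford_dim m) :=
  match m return nat -> 'M[C]_(clifford_dim m) with
  | 0 => fun _ => 1%:M
  | m'.+1 => fun k => if (k < m')%N then block_mx (clifford m' k) 0 0 (- clifford m' k)
                      else block_mx 0 1%:M 1%:M 0
  end.

Lemma clifford_dim_gt0 m : (0 < clifford_dim m)%N.
Proof. by elim: m => //= m IH; rewrite addn_gt0 IH. Qed.

Section CliffordConstruction.
Variable C : numClosedFieldType.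

Lemma clifford_herm m k : hermitian (@clifford C m k).
Proof.
rewrite /hermitian; elim: m k => [|m IH] k /=; first exact: adjmx1.
by case: ifP => _; rewrite adjmx_block ?adjmx0 ?adjmx1 ?adjmxN ?IH.
Qed.

Lemma clifford_sq m k : @clifford C m k *m clifford m k = 1%:M.
Proof.
elim: m k => [|m IH] k /=; first by rewrite mul1mx.
case: ifP => _; rewrite mulmx_block !mulmx0 !mul0mx ?mul1mx ?mulmx1 !addr0 ?add0r.
  by rewrite mulmxN mulNmx opprK IH -scalar_mx_block.
by rewrite -scalar_mx_block.
Qed.

Lemma clifford_anti m k l : (k < m)%N -> (l < m)%N -> k != l ->
  @clifford C m k *m clifford m l = - (clifford m l *m clifford m k).
Proof.
elim: m k l => [//|m IH] k l; rewrite !ltnS /= => k_le l_le kl.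
have [k_lt|k_ge] := ltnP k m; have [l_lt|l_ge] := ltnP l m;
  rewrite !mulmx_block !mulmx0 !mul0mx ?mul1mx ?mulmx1 !addr0 !add0r opp_block_mx !oppr0.
- by rewrite !mulmxN !mulNmx !opprK IH.
- by rewrite opprK.
- by rewrite opprK.
- by case/negP: kl; rewrite eqn_leq (leq_trans k_le l_ge) (leq_trans l_le k_ge).
Qed.

End CliffordConstruction.

Lemma unpair_idx_bij m n : bijective (@unpair_idx m n).
Proof.
exists (fun p => cast_ord (mxvec_cast m n) (enum_rank p)) => k.
  by rewrite /unpair_idx enum_valK cast_ordKV.
by rewrite /unpair_idx cast_ordK enum_rankK.
Qed.

Lemma sum_unpair_idx (V : nmodType) m n (F : 'I_m * 'I_n -> V) :
  \sum_(k < m * n) F (unpair_idx k) = \sum_(i < m) \sum_(j < n) F (i, j).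
Proof.
rewrite pair_big /= (reindex (@unpair_idx m n)) /=; last exact: onW_bij (unpair_idx_bij m n).
by apply: eq_bigr => k _; case: (unpair_idx k).
Qed.

(* k indexes a diagonal basis vector e_i (x) e_i of C^N (x) C^N. *)
Definition diag_idx N (k : 'I_(N * N)) : bool := (unpair_idx k).1 == (unpair_idx k).2.

Lemma sum_diag_idx (V : nmodType) N (F : 'I_N * 'I_N -> V) :
  \sum_(k < N * N) F (unpair_idx k) *+ diag_idx k = \sum_(i < N) F (i, i).
Proof.
rewrite (sum_unpair_idx (fun p => F p *+ (p.1 == p.2))).
by apply: eq_bigr => i _; rewrite sum_natmul_delta.
Qed.

Section BellState.
Variables (C : numClosedFieldType) (N : nat).

(* The unnormalized maximally entangled vector sum_i e_i (x) e_i, and the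
   maximally entangled state rho = |phi><phi| / N. *)
Definition bell_vec : 'rV[C]_(N * N) := \row_k (diag_idx k)%:R.
Definition bell_state : 'M[C]_(N * N) := N%:R^-1 *: (bell_vec^T *m bell_vec).

(* phi has squared norm N, so rho is a projection of trace one. *)
Lemma bell_vec_norm : bell_vec *m bell_vec^T = (N%:R : C)%:M.
Proof.
apply/matrixP => i j; rewrite !ord1 !mxE eqxx mulr1n.
transitivity (\sum_(i < N) (1 : C)); last by rewrite sumr_const card_ord.
rewrite -(sum_diag_idx (fun=> 1)); apply: eq_bigr => k _.
by rewrite !mxE; case: diag_idx; rewrite ?mulr1 ?mulr0.
Qed.

Lemma bell_vec_adj : adjmx bell_vec = bell_vec^T.
Proof. by apply/matrixP => i j; rewrite !mxE conjC_nat. Qed.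

Lemma bell_state_herm : hermitian bell_state.
Proof.
rewrite /hermitian /bell_state adjmxZ adjmxM adjmx_tr bell_vec_adj trmxK.
by rewrite fmorphV rmorph_nat.
Qed.

Lemma tr_bell_state (A B : 'M[C]_N) :
  \tr (bell_state *m tensmx A B) = N%:R^-1 * \tr (A^T *m B).
Proof.
rewrite -scalemxAl mxtraceZ -mulmxA mxtrace_mulC; congr (_ * _).
rewrite /mxtrace big_ord1 mxE.
transitivity (\sum_(k < N * N) (\sum_(l < N * N)
  (A (unpair_idx l).1 (unpair_idx k).1 * B (unpair_idx l).2 (unpair_idx k).2)
     *+ diag_idx l) *+ diag_idx k).
  apply: eq_bigr => k _; rewrite !mxE mulr_natr; congr (_ *+ _).
  by apply: eq_bigr => l _; rewrite !mxE mulr_natl.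
rewrite (sum_diag_idx (fun q => \sum_l (A (unpair_idx l).1 q.1 * B (unpair_idx l).2 q.2)
                                   *+ diag_idx l)).
apply: eq_bigr => i _; rewrite (sum_diag_idx (fun p => A p.1 i * B p.2 i)) mxE.
by apply: eq_bigr => j _; rewrite mxE.
Qed.

Hypothesis N_gt0 : (0 < N)%N.

Lemma bell_state_idem : bell_state *m bell_state = bell_state.
Proof.
rewrite /bell_state -scalemxAl -scalemxAr scalerA mulmxA -(mulmxA _ bell_vec).
rewrite bell_vec_norm mul_mx_scalar -scalemxAl scalerA -mulrA mulVf ?mulr1 //.
by rewrite pnatr_eq0 -lt0n.
Qed.

Lemma bell_state_is_state : is_state bell_state.
Proof.
split; first exact: projection_psd bell_state_herm bell_state_idem.
rewrite mxtraceZ mxtrace_mulC bell_vec_norm mxtrace_scalar mulr1n mulVf //.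
by rewrite pnatr_eq0 -lt0n.
Qed.

End BellState.
Arguments bell_state {C} N.

Lemma bell_clifford_correlation (C : numClosedFieldType) M N (G : 'I_M -> 'M[C]_N)
    (c : 'I_M -> C) x :
  (0 < N)%N -> (forall x, G x *m G x = 1%:M) ->
  (forall x x', x != x' -> G x *m G x' = - (G x' *m G x)) ->
  \tr (bell_state N *m tensmx (G x)^T (\sum_x' c x' *: G x')) = c x.
Proof.
move=> N_gt0 G_sq G_anti.
rewrite tr_bell_state trmxK clifford_tr_comb // mulrCA mulVf ?mulr1 //.
by rewrite pnatr_eq0 -lt0n.
Qed.

Theorem corollary2 (C : numClosedFieldType) (M : nat) (g : 'M[C]_M) (s : C) :
  g \is a mxOver Num.real ->
  g != 0 ->
  (forall t t', singular_value g t -> singular_value g t' -> t = t') ->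
  spec_norm g s ->
  exists (n1 n2 : nat) (rho : 'M[C]_(n1 * n2)) (A1 A2 : 'I_M -> 'M[C]_(_)),
    is_state rho /\
    (forall x, observable (A1 x : 'M[C]_n1)) /\
    (forall x, observable (A2 x : 'M[C]_n2)) /\
    \sum_(x1 < M) \sum_(x2 < M)
        g x1 x2 * \tr (rho *m tensmx (A1 x1) (A2 x2)) = M%:R * s.
Proof.
move=> g_real g_nz sv_unique [s_sv _].
have gram := gram_equal_singular_values sv_unique s_sv.
have col_norm := real_gram_scalar_col g_real gram.
have s_nz : s != 0.
  apply: contra g_nz => /eqP s0; apply/eqP/gram_eq0.
  by rewrite gram s0 expr0n /= raddf0.
pose N := clifford_dim M; pose G (x : 'I_M) : 'M[C]_N := clifford M x.
pose c (y x : 'I_M) := g x y / s.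
have c_real y x : c y x \is Num.real.
  by rewrite rpredM ?rpredV ?(mxOverP g_real) ?ger0_real ?s_sv.1.
have G_sq x : G x *m G x = 1%:M := clifford_sq _ M x.
have G_anti x x' : x != x' -> G x *m G x' = - (G x' *m G x).
  by move=> ne; apply: clifford_anti.
have G_herm x : hermitian (G x) := clifford_herm _ M x.
exists N, N, (bell_state N), (fun x => (G x)^T), (fun y => \sum_x c y x *: G x).
split; first exact/bell_state_is_state/clifford_dim_gt0.
split; first by move=> x; apply: trmx_involution_observable.
split.
  move=> y; apply: clifford_comb_observable => //.
  under eq_bigr do rewrite expr_div_n.
  by rewrite -mulr_suml col_norm divff // expf_neq0.
under eq_bigr => x _ do under eq_bigr => y _ do
  rewrite bell_clifford_correlation ?clifford_dim_gt0 //.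
rewrite exchange_big /= mulr_natl -[in RHS](card_ord M) -sumr_const; apply: eq_bigr => y _.
rewrite -[RHS](mulfK s_nz) -expr2 -(col_norm y) mulr_suml.
by apply: eq_bigr => x _; rewrite mulrA expr2.
Qed.
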